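(* Let $n\ge3$, $i\ge0$, $1\le k\le n$, and suppose $\mathcal{L}_i\cap\mathcal{B}_k\neq\emptyset$. Then $\mathcal{L}_i\cap\mathcal{B}_k$ contains at most one element of the form $x_1^t\partial_k$ (with $t\ge0$ an integer). If it contains such an element, then this element is the unique element of minimum weight-degree $\mathrm{WD}$ in $\mathcal{L}_i\cap\mathcal{B}_k$, and its exponent is $t=i-h_i(n-k)+1$.
   Context: Fix an integer $n\ge 3$. A partition is a sequence $\Lambda=(\lambda_j)_{j\ge1}$ of non-negative integers with finite support; $\mathrm{wt}(\Lambda)=\sum_j j\lambda_j$; $\mathrm{Part}(k)$ is the set of partitions with $\lambda_j=0$ for $j>k$. Write $x^\Lambda=\prod_j x_j^{\lambda_j}$, $\deg(x^\Lambda)=\sum_j\lambda_j$. $\mathcal{B}=\{x^\Lambda\partial_k : 1\le k\le n,\ \Lambda\in\mathrm{Part}(k-1)\}$ and $\mathcal{B}_u=\{x^\Lambda\partial_k\in\mathcal{B}: k=u\}$. For an integer $i\ge-1$, let $r_i\in\{1,\dots,n-1\}$ with $i\equiv r_i\pmod{n-1}$ and $h_i=\lfloor (i-1)/(n-1)\rfloor+1$. The weight-degree is $\mathrm{WD}(x^\Lambda\partial_k)=\mathrm{wt}(\Lambda)-\deg(x^\Lambda)+n-k$, and $\mathrm{lev}_i(x^\Lambda\partial_k)=h_i\,\mathrm{WD}(x^\Lambda\partial_k)+\deg(x^\Lambda)-1$. For $i\ge-1$, $\mathcal{N}_i=\{b\in\mathcal{B}: \mathrm{lev}_j(b)\le j\text{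 for some integer } -1\le j\le i\}$, and $\mathcal{L}_i=\mathcal{N}_i\setminus\mathcal{N}_{i-1}$ for $i\ge0$. *)

From mathcomp Require Import all_boot all_order all_algebra.
Set Implicit Arguments. Unset Strict Implicit. Unset Printing Implicit Defensive.
Import Order.TTheory GRing.Theory Num.Theory.
Local Open Scope ring_scope.

(* An element x^Lambda d_k of B with Lambda in Part(k-1) is encoded by the
   index k together with the list s = [:: lambda_1; ...; lambda_(k-1)]
   (of size k-1): lambda_j = nth 0 s (j-1), and lambda_j = 0 for j > k-1. *)

Definition wt (s : seq nat) : nat :=
  (\sum_(j < size s) j.+1 * nth 0 s j)%N.

Definition deg (s : seq nat) : nat := sumn s.

Definition inB (n k : nat) (s : seq nat) : bool :=
  [&& (1 <= k)%N, (k <= n)%N & size s == k.-1].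

Definition is_x1pow (s : seq nat) (t : nat) : Prop :=
  forall j : nat, nth 0 s j = (if j == 0%N then t else 0%N).

Definition hh (n : nat) (i : int) : int :=
  ((i - 1) %/ (n.-1)%:Z)%Z + 1.

Definition WD (n k : nat) (s : seq nat) : int :=
  (wt s)%:Z - (deg s)%:Z + n%:Z - k%:Z.

Definition lev (n : nat) (i : int) (k : nat) (s : seq nat) : int :=
  hh n i * WD n k s + (deg s)%:Z - 1.

Definition inN (n : nat) (i : int) (k : nat) (s : seq nat) : Prop :=
  inB n k s /\ exists j : int, -1 <= j /\ j <= i /\ lev n j k s <= j.

Definition inL (n : nat) (i : int) (k : nat) (s : seq nat) : Prop :=
  inN n i k s /\ ~ inN n (i - 1) k s.

From mathcomp Require Import all_boot all_order all_algebra.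
From mathcomp Require Import zify.
Set Implicit Arguments. Unset Strict Implicit.
Import Order.TTheory GRing.Theory Num.Theory.
Local Open Scope ring_scope.

(* For b = x_1^t d_k one has wt = deg = t, so WD(b) = n - k, the least weight-degree
   possible in B_k, and any other monomial of B_k has wt > deg, hence a larger WD.
   The level lev_j(b) = h_j (n - k) + t - 1 is affine in t; membership of b in L_i
   forces lev_i(b) <= i < lev_(i-1)(b) + 1, and as h_(i-1) <= h_i these two inequalities
   pin t down to i - h_i (n - k) + 1.  Since k and t determine b, uniqueness follows. *)

Lemma deg_sum (s : seq nat) : deg s = (\sum_(j < size s) nth 0 s j)%N.
Proof.
elim: s => [|x s IHs]; first by rewrite /deg big_ord0.
by rewrite /deg /= big_ord_recl -IHs.
Qed.

Lemma wtE (s : seq nat) :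
  wt s = (deg s + \sum_(j < size s) j * nth 0 s j)%N.
Proof. by rewrite /wt deg_sum -big_split; apply: eq_bigr => j _; rewrite mulSn. Qed.

Lemma deg_x1pow (s : seq nat) (t : nat) : is_x1pow s t -> deg s = t.
Proof.
case: s => [|x s] x1s; first by move: (x1s 0%N).
rewrite deg_sum big_ord_recl big1 ?addn0; first by move: (x1s 0%N).
by move=> j _; move: (x1s (bump 0 j)).
Qed.

Lemma wt_x1pow (s : seq nat) (t : nat) : is_x1pow s t -> wt s = t.
Proof.
move=> x1s; rewrite wtE (deg_x1pow x1s) big1 ?addn0 // => j _.
by rewrite x1s; case: eqP => [->|_]; rewrite ?mul0n ?muln0.
Qed.

Lemma x1pow_or_deg_lt_wt (s : seq nat) :
  is_x1pow s (nth 0 s 0) \/ (deg s < wt s)%N.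
Proof.
have [/existsP [j /andP [j_gt0 sj_gt0]] | /existsPn no_j] :=
  boolP [exists j : 'I_(size s), (0 < j)%N && (0 < nth 0 s j)%N].
  right; rewrite wtE -addn1 leq_add2l (bigD1 j) //=.
  by apply: leq_trans (leq_addr _ _); rewrite muln_gt0 j_gt0.
left=> j; case: eqP => [-> // | /eqP j_neq0].
have [j_lt | j_ge] := ltnP j (size s); last by rewrite nth_default.
by apply/eqP; move: (no_j (Ordinal j_lt)); rewrite /= lt0n j_neq0 lt0n negbK.
Qed.

Lemma eq_x1pow (s1 s2 : seq nat) (t : nat) :
  size s1 = size s2 -> is_x1pow s1 t -> is_x1pow s2 t -> s1 = s2.
Proof.
move=> eq_size x1s1 x1s2; apply: (eq_from_nth (x0 := 0%N) eq_size) => j _.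
by rewrite x1s1 x1s2.
Qed.

Lemma WD_x1pow (n k : nat) (s : seq nat) (t : nat) :
  is_x1pow s t -> WD n k s = n%:Z - k%:Z.
Proof. by move=> x1s; rewrite /WD (wt_x1pow x1s) (deg_x1pow x1s) subrr add0r. Qed.

Lemma WD_x1pow_lt (n k : nat) (s s' : seq nat) (t : nat) :
  is_x1pow s t -> (deg s' < wt s')%N -> WD n k s < WD n k s'.
Proof. by move=> x1s lt_s'; rewrite (WD_x1pow _ _ x1s) /WD; lia. Qed.

Lemma lev_x1pow (n : nat) (j : int) (k : nat) (s : seq nat) (t : nat) :
  is_x1pow s t -> lev n j k s = hh n j * (n%:Z - k%:Z) + t%:Z - 1.
Proof. by move=> x1s; rewrite /lev (WD_x1pow _ _ x1s) (deg_x1pow x1s). Qed.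

Lemma hh_homo (n : nat) : {homo hh n : a b / a <= b}.
Proof. by move=> a b le_ab; rewrite /hh lerD2r lez_pdiv2r // lerD2r. Qed.

Lemma inL_lev (n i k : nat) (s : seq nat) :
  inL n i%:Z k s -> lev n i%:Z k s <= i%:Z /\ i%:Z - 1 < lev n (i%:Z - 1) k s.
Proof.
move=> [[sB [j [j_ge [j_le lev_j]]]] notN]; split.
  have [j_lt | i_le_j] := ltP j i%:Z.
    by case: notN; split=> //; exists j; do !split=> //; lia.
  by have -> : i%:Z = j by apply/eqP; rewrite eq_le i_le_j j_le.
rewrite ltNge; apply/negP => lev_pred; case: notN; split=> //.
by exists (i%:Z - 1); do !split=> //; lia.
Qed.

Lemma inL_x1pow_exponent (n i k : nat) (s : seq nat) (t : nat) :
  inL n i%:Z k s -> is_x1pow s t ->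
  t%:Z = i%:Z - hh n i%:Z * (n%:Z - k%:Z) + 1.
Proof.
move=> sL x1s; have /and3P [_ le_kn _] := sL.1.1.
have [] := inL_lev sL; rewrite !(lev_x1pow _ _ _ x1s).
have : hh n (i%:Z - 1) * (n%:Z - k%:Z) <= hh n i%:Z * (n%:Z - k%:Z).
  by rewrite ler_wpM2r ?subr_ge0 ?lez_nat ?hh_homo ?gerBl.
lia.
Qed.

Lemma inL_x1pow_unique (n i k : nat) (s1 s2 : seq nat) (t1 t2 : nat) :
  inL n i%:Z k s1 -> is_x1pow s1 t1 -> inL n i%:Z k s2 -> is_x1pow s2 t2 ->
  s1 = s2.
Proof.
move=> s1L x1s1 s2L x1s2.
have /and3P [_ _ /eqP size1] := s1L.1.1.
have /and3P [_ _ /eqP size2] := s2L.1.1.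
have /eqP := inL_x1pow_exponent s1L x1s1.
rewrite -(inL_x1pow_exponent s2L x1s2) eqz_nat => /eqP eq_t.
by apply: eq_x1pow x1s1 _; rewrite ?size1 ?size2 ?eq_t.
Qed.

Theorem proposition2p14 (n i k : nat) :
  (3 <= n)%N -> (1 <= k)%N -> (k <= n)%N ->
  (exists s, inL n i%:Z k s /\ inB n k s) ->
  (forall s1 s2 t1 t2,
      inL n i%:Z k s1 -> inB n k s1 -> is_x1pow s1 t1 ->
      inL n i%:Z k s2 -> inB n k s2 -> is_x1pow s2 t2 -> s1 = s2) /\
  (forall s t, inL n i%:Z k s -> inB n k s -> is_x1pow s t ->
      (forall s', inL n i%:Z k s' -> inB n k s' -> s' <> s ->
          WD n k s < WD n k s') /\
      t%:Z = i%:Z - hh n i%:Z * (n%:Z - k%:Z) + 1).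
Proof.
move=> _ _ _ _; split=> [s1 s2 t1 t2 s1L _ x1s1 s2L _ x1s2 | s t sL _ x1s].
  exact: inL_x1pow_unique s1L x1s1 s2L x1s2.
split; last exact: inL_x1pow_exponent sL x1s.
move=> s' s'L _ neq_s'; have [x1s' | lt_s'] := x1pow_or_deg_lt_wt s'.
  by case: neq_s'; apply: inL_x1pow_unique s'L x1s' sL x1s.
exact: WD_x1pow_lt x1s lt_s'.
Qed.
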